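(* Let $q\ge 2$ be a prime power, $m\ge1$, $n=q^m-1=r_1r_2$ with $r_1,r_2>1$, $\gcd(r_1,r_2)=1$, and let $a$ be the multiplicative order of $q$ modulo $r_1$. Fix a generator $\alpha$ of $\mathbb{F}_{q^m}^*$ and a group isomorphism $T:\mathbb{Z}_n\to\mathbb{Z}_{r_1}\times\mathbb{Z}_{r_2}$, and let $\Gamma=\{(i_1,i_2)\in\mathbb{Z}_{r_1}\times\mathbb{Z}_{r_2}\mid 0\le i_1<a,\ 0\le i_2<m/a\}$. Then the set $\{0\}\cup\{\alpha^i\mid i\in T^{-1}(\Gamma)\}\subseteq\mathbb{F}_{q^m}$ is an information set for $R_q(1,m)$, and the set $\{\alpha^i\mid i\in\mathbb{Z}_n,\ i\notin T^{-1}(\Gamma)\}$ is an information set for $R_q(m(q-1)-2,m)$.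
   Context: $\mathbb{F}=\mathbb{F}_q$; elements of $\mathbb{Z}_r$ are identified with integers $0,\dots,r-1$. The $q$-weight $\mathrm{wt}_q(k)$ of a natural number $k$ is the sum of its digits in base $q$. Let $G$ be the additive group of $\mathbb{F}_{q^m}$; words of length $q^m$ are vectors in $\mathbb{F}^G$, written $bX^0+\sum_{i=0}^{n-1}a_iX^{\alpha^i}$ (coordinates indexed by $0$ and by $\alpha^i$, $0\le i<n$). For $0<\rho\le m(q-1)$, the generalized Reed–Muller code $R_q(\rho,m)$ consists of the words with $b\cdot0^s+\sum_{i}a_i\alpha^{is}=0$ for every $0\le s<q^m-1$ with $\mathrm{wt}_q(s)<m(q-1)-\rho$ (with $0^0=1$). For a linear code $C$ of dimension $k$ on coordinate set $P$, an information set is $I\subseteq P$ with $|I|=k$ such that projection of $C$ onto $I$ is onto $\mathbb{F}^k$. *)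

From HB Require Import structures.
From mathcomp Require Import all_boot all_order all_algebra all_field.
Set Implicit Arguments. Unset Strict Implicit. Unset Printing Implicit Defensive.
Import GRing.Theory.
Local Open Scope ring_scope.

Fixpoint digsum (q k fuel : nat) : nat :=
  match fuel with
  | 0 => 0%N
  | f.+1 => (k %% q + digsum q (k %/ q) f)%N
  end.

(* q-weight wt_q(k) : sum of the base-q digits of k (for q >= 2) *)
Definition wt_q (q k : nat) : nat := digsum q k k.

Section RM.
Variable L : finFieldType.

(* the subfield F_q of L = F_{q^m} : elements fixed by x |-> x^q *)
Definition Fq (q : nat) : {set L} := [set x : L | x ^+ q == x].

(* Generalized Reed-Muller code R_q(rho, m): words (functions from the
   coordinate set G = F_{q^m} to F_q) satisfying, for every
   0 <= s < q^m - 1 with wt_q s < m(q-1) - rho, the check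
   b*0^s + sum_i a_i alpha^(i s) = sum_{x in F_{q^m}} w(x) x^s = 0
   (with 0^0 = 1, which is mathcomp's convention 0 ^+ 0 = 1). *)
Definition RM_code (q m rho : nat) : {set {ffun L -> L}} :=
  [set w : {ffun L -> L} |
     [forall x, w x \in Fq q] &&
     [forall s : 'I_(q ^ m).-1,
        (wt_q q s < m * (q - 1) - rho)%N ==> (\sum_(x : L) w x * x ^+ s == 0)]].

(* dimension k of an F_q-linear code C : |C| = q^k *)
Definition code_dim (q : nat) (C : {set {ffun L -> L}}) : nat :=
  trunc_log q #|C|.

Definition info_set (q : nat) (C : {set {ffun L -> L}}) (I : {set L}) : Prop :=
  #|I| = code_dim q C /\
  forall f : L -> L, (forall x, x \in I -> f x \in Fq q) ->
    exists2 c, c \in C & forall x, x \in I -> c x = f x.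
End RM.

From HB Require Import structures.
From mathcomp Require Import all_boot all_algebra all_field all_solvable.
From mathcomp Require Import zify ring.
Set Implicit Arguments. Unset Strict Implicit. Unset Printing Implicit Defensive.
Import GRing.Theory.

(* Write F for F_q, the subfield of L = F_(q^m) fixed by x |-> x^q, and n = q^m - 1.
   By Lagrange interpolation a word w is determined by its power sums
   S_s = sum_x w(x) x^s, and the parity checks of R_q(1, m) kill every S_s with
   s < n except those with n - s a power of q.  Hence every codeword is a map
   c + l(x) with l F-linear, and the maps c + Tr(b x) already give q^(m+1)
   codewords.  So for any F-basis B of L, {0} ∪ B is an information set: a
   codeword vanishing on it vanishes everywhere.  The checks of
   R_q(m(q-1)-2, m) say exactly sum_x w(x) = sum_x w(x) x = 0; given the values
   of w off {0} ∪ B, these two equations determine w on B (through the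
   coordinates of -sum_x w(x) x in the basis B) and then at 0, so the
   complement of {0} ∪ B is an information set.  Finally
   {alpha^i | i in T^-1(Gamma)} is the set {beta^i gamma^j | i < a, j < m/a},
   with beta, gamma primitive r1-th and r2-th roots of unity.  It is a basis:
   beta has a distinct conjugates over F since a is the order of q mod r1, and
   gamma has m/a distinct conjugates over F(beta) = F_(q^a) since
   q^(a s) = q^(a t) mod r2 and mod r1 forces equality mod n. *)

Section Weight.
Variable q : nat.
Hypothesis q_gt1 : 1 < q.

Lemma digsum0n fuel : digsum q 0 fuel = 0.
Proof. by elim: fuel => //= fuel IH; rewrite mod0n div0n IH. Qed.

Lemma digsum_fuel k f1 f2 : k <= f1 -> k <= f2 -> digsum q k f1 = digsum q k f2.
Proof.
elim: f1 k f2 => [|f1 IH] k f2; first by rewrite leqn0 => /eqP -> _; rewrite !digsum0n.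
case: k => [|k] hk1 hk2; first by rewrite !digsum0n.
case: f2 hk2 => [//|f2] hk2 /=.
have lt_k : k.+1 %/ q < k.+1 by rewrite ltn_Pdiv.
by rewrite (IH _ f2) //; lia.
Qed.

Lemma wt_qE k : wt_q q k = k %% q + wt_q q (k %/ q).
Proof.
case: k => [|k]; first by rewrite mod0n div0n.
have lt_k : k.+1 %/ q < k.+1 by rewrite ltn_Pdiv.
by rewrite /wt_q /=; congr (_ + _); apply: digsum_fuel => //; lia.
Qed.

(* Digitwise, the base-q digits of q^m - 1 - k are the complements q - 1 - k_i. *)
Lemma wt_q_compl m k : k < q ^ m -> wt_q q k + wt_q q (q ^ m - 1 - k) = m * (q - 1).
Proof.
elim: m k => [|m IH] k lt_k; first by rewrite expn0 ltnS leqn0 in lt_k; rewrite (eqP lt_k).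
have q_gt0 : 0 < q by lia.
have lt_kq : k %/ q < q ^ m by rewrite ltn_divLR // -expnSr.
have lt_k0 := ltn_pmod k q_gt0.
have wt_k1 := IH _ lt_kq.
rewrite (wt_qE k) (wt_qE (q ^ m.+1 - 1 - k)) [in q ^ m.+1 - 1 - k](divn_eq k q).
move: (k %/ q) (k %% q) lt_kq lt_k0 wt_k1 => k1 k0 lt_k1 lt_k0 wt_k1.
have -> : q ^ m.+1 - 1 - (k1 * q + k0) = (q ^ m - 1 - k1) * q + (q - 1 - k0).
  have : k1.+1 * q <= q ^ m * q by rewrite leq_mul2r lt_k1 orbT.
  rewrite expnSr -subnDA !mulnBl mulSn mul1n.
  move: (q ^ m * q) (k1 * q) => A B; lia.
rewrite modnMDl divnMDl // modn_small ?divn_small ?addn0 ?mulSn; lia.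
Qed.

Lemma wt_q_eq0 k : wt_q q k = 0 -> k = 0.
Proof.
elim/ltn_ind: k => k IH; rewrite wt_qE => wt0.
have [-> //|k_gt0] := posnP k.
rewrite (divn_eq k q) (IH (k %/ q)) ?ltn_Pdiv //; lia.
Qed.

Lemma wt_q_eq1 k : wt_q q k = 1 -> exists j, k = q ^ j.
Proof.
elim/ltn_ind: k => k IH; rewrite wt_qE => wt1.
have [k0|k_gt0] := posnP k; first by move: wt1; rewrite k0 mod0n div0n.
have [[r1 d0]|[r0 d1]] : (k %% q = 1 /\ wt_q q (k %/ q) = 0) \/
                         (k %% q = 0 /\ wt_q q (k %/ q) = 1) by lia.
  by exists 0; rewrite (divn_eq k q) r1 (wt_q_eq0 d0).
have [j kq] := IH _ (ltn_Pdiv q_gt1 k_gt0) d1.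
by exists j.+1; rewrite (divn_eq k q) r0 kq addn0 expnSr.
Qed.

Lemma wt_q_expn j : wt_q q (q ^ j) = 1.
Proof.
elim: j => [|j IH]; first by rewrite expn0 wt_qE modn_small // divn_small.
by rewrite wt_qE expnS modnMr mulKn ?IH //; lia.
Qed.

End Weight.

Lemma expn_eq_mod_sub q r s t : 0 < q -> coprime q r -> s <= t ->
  (q ^ s == q ^ t %[mod r]) = (q ^ (t - s) == 1 %[mod r]).
Proof.
move=> q_gt0 cop_qr le_st.
rewrite eq_sym [RHS]eqn_mod_dvd ?expn_gt0 ?q_gt0 // eqn_mod_dvd ?leq_pexp2l //.
rewrite -{1}(subnKC le_st) expnD -{2}(muln1 (q ^ s)) -mulnBr Gauss_dvdr //.
by rewrite coprime_sym coprimeXl.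
Qed.

Section MultiplicativeOrder.
Variables (q m r1 r2 a : nat).
Hypotheses (q_gt1 : 1 < q) (m_gt0 : 0 < m) (n_gt1 : 1 < (q ^ m).-1).
Hypotheses (n_eq : (q ^ m).-1 = r1 * r2) (cop_r : coprime r1 r2).
Hypotheses (a_gt0 : 0 < a) (qa_eq1 : q ^ a = 1 %[mod r1])
  (a_min : forall k, 0 < k -> q ^ k = 1 %[mod r1] -> a <= k).

Lemma coprime_q_dvdn r : r %| (q ^ m).-1 -> coprime q r.
Proof.
move=> r_dvd_n; apply: coprime_dvdr r_dvd_n _.
have qm_gt0 : 0 < q ^ m by rewrite expn_gt0 ltnW.
by rewrite -(coprime_pexpl _ _ m_gt0) -{1}(prednK qm_gt0) coprimeSn.
Qed.

Lemma qm_eq1_mod_r1 : q ^ m = 1 %[mod r1].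
Proof.
apply/eqP; rewrite eqn_mod_dvd ?expn_gt0 ?(ltnW q_gt1) // subn1 n_eq.
exact: dvdn_mulr.
Qed.

Lemma qa_pow_eq1 k : q ^ (a * k) = 1 %[mod r1].
Proof. by rewrite expnM -modnXm qa_eq1 modnXm exp1n. Qed.

Lemma a_dvd_m : a %| m.
Proof.
rewrite /dvdn; have [/eqP//|mod_gt0] := posnP (m %% a).
have : q ^ (m %% a) = 1 %[mod r1].
  move: qm_eq1_mod_r1; rewrite {1}(divn_eq m a) [_ * a]mulnC expnD.
  by rewrite -modnMml qa_pow_eq1 modnMml mul1n.
by move/(a_min mod_gt0); rewrite leqNgt ltn_pmod.
Qed.

Lemma coprime_q_r1 : coprime q r1.
Proof. by apply: coprime_q_dvdn; rewrite n_eq dvdn_mulr. Qed.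

Lemma eq_expn_mod_r1 (s t : 'I_a) : q ^ s = q ^ t %[mod r1] -> s = t.
Proof.
wlog le_st : s t / s <= t => [hwlog|/eqP].
  by have [/hwlog//|/ltnW/hwlog hts /esym/hts] := leqP s t.
rewrite expn_eq_mod_sub ?(ltnW q_gt1) ?coprime_q_r1 // => /eqP qts_eq1.
have [lt_st|le_ts] := ltnP s t; last exact/val_inj/anti_leq/andP.
have := @a_min (t - s) _ qts_eq1; rewrite subn_gt0 => /(_ lt_st).
by have := ltn_ord t; lia.
Qed.

Lemma expn_lt_n k : k < m -> q ^ k < (q ^ m).-1.
Proof.
move=> lt_km; have le_qk : q ^ k * q <= q ^ m by rewrite -expnSr leq_pexp2l ?(ltnW q_gt1).
have : q ^ k * 2 <= q ^ k * q by rewrite leq_mul2l q_gt1 orbT.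
by move: n_gt1 le_qk; rewrite -subn1; move: (q ^ k * q) (q ^ m) => Y Q; lia.
Qed.

Lemma eq_expn_mod_r2 (s t : 'I_(m %/ a)) : q ^ (a * s) = q ^ (a * t) %[mod r2] -> s = t.
Proof.
move=> /eqP eq_r2; apply/val_inj/eqP; rewrite -(eqn_pmul2l a_gt0).
rewrite -(eqn_exp2l (a * s) (a * t) q_gt1).
have lt_am (u : 'I_(m %/ a)) : a * u < m by rewrite -{2}(divnK a_dvd_m) mulnC ltn_pmul2r.
rewrite -(modn_small (expn_lt_n (lt_am s))) -(modn_small (expn_lt_n (lt_am t))) n_eq.
by rewrite chinese_remainder // !qa_pow_eq1 eqxx eq_r2.
Qed.

Lemma a_le_r1 : a <= r1.
Proof.
have r1_gt0 : 0 < r1 by move: n_gt1; rewrite n_eq; case: r1.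
pose f (s : 'I_a) : 'I_r1 := Ordinal (ltn_pmod (q ^ s) r1_gt0).
have /leq_card : injective f by move=> s t /(congr1 val) /eq_expn_mod_r1.
by rewrite !card_ord.
Qed.

Lemma div_a_le_r2 : m %/ a <= r2.
Proof.
have r2_gt0 : 0 < r2 by move: n_gt1; rewrite n_eq; case: r2 => //; rewrite muln0.
pose f (s : 'I_(m %/ a)) : 'I_r2 := Ordinal (ltn_pmod (q ^ (a * s)) r2_gt0).
have /leq_card : injective f by move=> s t /(congr1 val) /eq_expn_mod_r2.
by rewrite !card_ord.
Qed.

End MultiplicativeOrder.

Local Open Scope ring_scope.

Lemma prim_root_dvd (R : nzRingType) (r : nat) (z : R) : (0 < r)%N ->
  (forall j, (z ^+ j == 1) = (r %| j)%N) -> r.-primitive_root z.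
Proof.
move=> r_gt0 z_dvd; rewrite /primitive_root_of_unity r_gt0; apply/forallP => i.
rewrite unity_rootE z_dvd; apply/eqP; apply/idP/eqP => [/(dvdn_leq (ltn0Sn _)) le_r|->//].
by apply/eqP; rewrite eqn_leq le_r ltn_ord.
Qed.

Lemma pair_mulrn (U V : nmodType) (x : U) (y : V) k : (x, y) *+ k = (x *+ k, y *+ k).
Proof. by elim: k => // k IH; rewrite !mulrS IH. Qed.

Lemma Zp_natr_eq0 r k : (1 < r)%N -> ((k%:R : 'Z_r) == 0) = (r %| k)%N.
Proof. by move=> r_gt1; rewrite -val_eqE /= (val_Zp_nat r_gt1). Qed.

Section FiniteField.
Variables (L : finFieldType) (q : nat).
Hypothesis pchar_q : [pchar L].-nat q.

Local Notation F := (Fq L q).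

Lemma pchar_expn e : [pchar L].-nat (q ^ e)%N.
Proof. by rewrite pnatX pchar_q. Qed.

Lemma frob0 e : (0 : L) ^+ (q ^ e) = 0.
Proof. by case/andP: (pchar_expn e) => /gtn_eqF qe_neq0 _; rewrite expr0n qe_neq0. Qed.

Lemma frobD e (x y : L) : (x + y) ^+ (q ^ e) = x ^+ (q ^ e) + y ^+ (q ^ e).
Proof. exact/exprDn_pchar/pchar_expn. Qed.

Lemma frobB e (x y : L) : (x - y) ^+ (q ^ e) = x ^+ (q ^ e) - y ^+ (q ^ e).
Proof. by rewrite frobD exprNn_pchar ?pchar_expn. Qed.

Lemma frob_sum e (I : Type) (r : seq I) (P : pred I) (G : I -> L) :
  (\sum_(i <- r | P i) G i) ^+ (q ^ e) = \sum_(i <- r | P i) G i ^+ (q ^ e).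
Proof. exact: (big_morph (fun x => x ^+ (q ^ e)) (frobD e) (frob0 e)). Qed.

Fact Fq_divring_closed : divring_closed F.
Proof.
split=> [|x y|x y]; rewrite !inE ?expr1n // => /eqP x_q /eqP y_q.
  by rewrite -[q]expn1 frobB expn1 x_q y_q.
by rewrite exprMn exprVn x_q y_q.
Qed.

HB.instance Definition _ :=
  GRing.isDivringClosed.Build L (pred_of_set F) Fq_divring_closed.

Lemma Fq_expn x e : x \in F -> x ^+ (q ^ e) = x.
Proof.
rewrite inE => /eqP x_q; elim: e => [|e IH]; first by rewrite expr1.
by rewrite expnSr exprM IH x_q.
Qed.

Lemma sum_indicator (I : finType) (f : I -> L) u : \sum_v (v == u)%:R * f v = f u.
Proof.
by rewrite (bigD1 u) //= eqxx mul1r big1 ?addr0 // => v /negbTE ->; rewrite mul0r.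
Qed.

Definition Fq_free (I : finType) (g : I -> L) :=
  forall mu : I -> L, (forall u, mu u \in F) -> \sum_u mu u * g u = 0 -> forall u, mu u = 0.

Section Free.
Variables (I : finType) (g : I -> L).
Hypothesis g_free : Fq_free g.

Lemma Fq_free_neq0 u : g u != 0.
Proof.
apply/eqP => gu0.
have mu_F v : (v == u)%:R \in F by exact: rpred_nat.
have /(_ u)/eqP := g_free mu_F (etrans (sum_indicator g u) gu0).
by rewrite eqxx oner_eq0.
Qed.

Lemma Fq_free_inj : injective g.
Proof.
move=> u v guv; apply/eqP/negPn/negP => neq_uv.
have mu_F w : (w == u)%:R - (w == v)%:R \in F by rewrite rpredB ?rpred_nat.
have sum0 : \sum_w ((w == u)%:R - (w == v)%:R) * g w = 0.
  by under eq_bigr do rewrite mulrBl; rewrite sumrB !sum_indicator guv subrr.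
have /(_ u)/eqP := g_free mu_F sum0.
by rewrite eqxx (negbTE neq_uv) subr0 oner_eq0.
Qed.

End Free.

Definition Fq_linear (f : L -> L) :=
  forall c y z, c \in F -> f (c * y + z) = c * f y + f z.

Lemma Fq_linear_eq f g : Fq_linear f -> f =1 g -> Fq_linear g.
Proof. by move=> lin_f eq_fg c y z c_F; rewrite -!eq_fg lin_f. Qed.

Lemma Fq_linear_frob c j : Fq_linear (fun y => c * y ^+ (q ^ j)).
Proof. by move=> d y z d_F; rewrite frobD exprMn Fq_expn // mulrDr mulrCA. Qed.

Lemma Fq_linear_sum (J : Type) (r : seq J) (P : pred J) (f : J -> L -> L) :
  (forall j, Fq_linear (f j)) -> Fq_linear (fun y => \sum_(j <- r | P j) f j y).
Proof.
move=> lin_f c y z c_F; rewrite mulr_sumr -big_split /=.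
by apply: eq_bigr => j _; rewrite lin_f.
Qed.

Lemma Fq_linear0 f : Fq_linear f -> f 0 = 0.
Proof.
move=> /(_ 1 0 0 (rpred1 _)); rewrite !mul1r !addr0 -{1}[f 0]addr0.
by move=> /addrI <-.
Qed.

Lemma Fq_linear_comb (I : finType) (g : I -> L) f (mu : I -> L) : Fq_linear f ->
  (forall u, mu u \in F) -> f (\sum_u mu u * g u) = \sum_u mu u * f (g u).
Proof.
move=> lin_f mu_F; elim/big_rec2: _ => [|u y1 y2 _ <-]; first exact: Fq_linear0.
exact: lin_f.
Qed.

(* The d distinct conjugates z^(q^(e s)) are roots of sum_t mu_t X^t, of degree < d. *)
Lemma free_powers_conj (z : L) (e d : nat) (mu : 'I_d -> L) :
  injective (fun s : 'I_d => z ^+ (q ^ (e * s))) ->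
  (forall t, mu t ^+ (q ^ e) = mu t) ->
  \sum_(t < d) mu t * z ^+ t = 0 -> forall t, mu t = 0.
Proof.
move=> conj_inj mu_fixed sum0.
have mu_fixedX t s : mu t ^+ (q ^ (e * s)) = mu t.
  by elim: s => [|s IH]; rewrite ?muln0 ?expr1 // mulnS expnD exprM mu_fixed IH.
pose P : {poly L} := \poly_(t < d) (if insub t is Some t' then mu t' else 0).
have coefP (t : 'I_d) : P`_t = mu t by rewrite coef_poly ltn_ord valK.
have rootsP : all (root P) [seq z ^+ (q ^ (e * s)) | s : 'I_d].
  apply/allP => _ /mapP[s _ ->]; rewrite /root horner_poly; apply/eqP.
  transitivity ((\sum_(t < d) mu t * z ^+ t) ^+ (q ^ (e * s))); last by rewrite sum0 frob0.
  rewrite frob_sum; apply: eq_bigr => t _.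
  by rewrite valK exprMn mu_fixedX -!exprM mulnC.
have P0 : P = 0.
  apply: contraTeq isT => P_neq0.
  have := max_poly_roots P_neq0 rootsP.
  rewrite map_inj_uniq ?enum_uniq // size_map -cardE card_ord => /(_ isT).
  by rewrite ltnNge size_poly.
by move=> t; rewrite -coefP P0 coef0.
Qed.

Section FullField.
Variable m : nat.
Hypotheses (m_gt0 : (0 < m)%N) (card_L : #|L| = (q ^ m)%N).

Local Notation n := (q ^ m)%N.-1.

Lemma q_gt1 : (1 < q)%N.
Proof.
have := finNzRing_gt1 L; rewrite card_L.
by case: q => [|[|q']] //; rewrite ?exp0n ?exp1n.
Qed.

Lemma prednK_card : n.+1 = (q ^ m)%N.
Proof. by rewrite prednK // expn_gt0 ltnW ?q_gt1. Qed.

Lemma n_gt0 : (0 < n)%N.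
Proof. by rewrite -ltnS prednK_card -[1%N](expn0 q) ltn_exp2l ?q_gt1. Qed.

Lemma expr_card x : x ^+ (q ^ m) = x :> L.
Proof. by rewrite -card_L expf_card. Qed.

Lemma mulrn_card (x : L) : x *+ (q ^ m) = 0.
Proof.
have /(pnatPpi pchar_q) p_char : pdiv q \in \pi(q) by rewrite pi_pdiv q_gt1.
apply/eqP; rewrite -mulr_natr mulf_eq0 -(dvdn_pcharf p_char).
by rewrite dvdn_exp ?pdiv_dvd ?orbT.
Qed.

Lemma expr_n_eq1 x : x != 0 -> x ^+ n = 1 :> L.
Proof.
move=> x_neq0; apply: (mulIf x_neq0).
by rewrite mul1r -exprSr prednK_card expr_card.
Qed.

Lemma exists_prim_root : exists z : L, n.-primitive_root z.
Proof.
have /hasP[z _ prim_z] : has n.-primitive_root (enum (predC1 (0 : L))).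
  apply: has_prim_root; rewrite ?n_gt0 ?enum_uniq //.
    by apply/allP => x; rewrite mem_enum => x_neq0; apply/unity_rootP/expr_n_eq1.
  by rewrite -cardE cardC1 card_L.
by exists z.
Qed.

Lemma card_Fq : #|F| = q.
Proof.
apply/eqP; rewrite eqn_leq; apply/andP; split.
  pose P : {poly L} := 'X^q - 'X.
  have size_P : size P = q.+1.
    by rewrite size_polyDl ?size_polyXn // size_polyN size_polyX ltnS q_gt1.
  have P_neq0 : P != 0 by rewrite -size_poly_eq0 size_P.
  have roots_P : all (root P) (enum F).
    apply/allP => x; rewrite mem_enum inE => /eqP x_q.
    by rewrite /root !hornerE x_q subrr.
  by have := max_poly_roots P_neq0 roots_P (enum_uniq _); rewrite size_P -cardE.
(* 0 and the q - 1 powers of a primitive (q-1)-th root of unity lie in F. *)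
have [z prim_z] := exists_prim_root.
have q1_dvd_n : (q.-1 %| n)%N.
  have q_gt0 : (0 < q)%N by rewrite ltnW ?q_gt1.
  rewrite -!subn1 -eqn_mod_dvd ?expn_gt0 ?q_gt0 // -modnXm.
  by rewrite -{1}(subnKC q_gt0) modnDr modnXm exp1n.
have prim_y := dvdn_prim_root prim_z q1_dvd_n.
set y := z ^+ (n %/ q.-1) in prim_y.
have y_q : y ^+ q = y.
  by rewrite -{1}(prednK (ltnW q_gt1)) exprSr (prim_expr_order prim_y) mul1r.
pose w (i : 'I_q.-1) := y ^+ i.
have w_inj : injective w.
  by move=> i j /eqP; rewrite (eq_prim_root_expr prim_y) !modn_small // => /eqP/val_inj.
have w_F i : w i \in F by rewrite inE -exprM mulnC exprM y_q.
have w_neq0 i : w i != 0.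
  by rewrite expf_neq0 // (prim_root_eq0 prim_y) -lt0n -subn1 subn_gt0 q_gt1.
have sub : 0 |: [set w i | i in 'I_q.-1] \subset F.
  by apply/subsetP => x /setU1P[-> | /imsetP[i _ ->]]; rewrite ?rpred0 ?w_F.
have := subset_leq_card sub; rewrite cardsU1 card_imset // card_ord.
have /negbTE-> : (0 : L) \notin [set w i | i in 'I_q.-1].
  by apply/imsetP => -[i _ /esym/eqP]; rewrite (negbTE (w_neq0 i)).
by rewrite add1n prednK // ltnW ?q_gt1.
Qed.

Lemma sum_expr0 : \sum_(x : L) x ^+ 0 = 0.
Proof. by under eq_bigr do rewrite expr0; rewrite sumr_const card_L mulrn_card. Qed.

Lemma sum_expr_eq0 e : ~~ (n %| e)%N -> \sum_(x : L) x ^+ e = 0.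
Proof.
move=> n_ndvd_e; have [z prim_z] := exists_prim_root.
have z_neq0 : z != 0 by rewrite (prim_root_eq0 prim_z) -lt0n n_gt0.
have ze_neq1 : z ^+ e != 1 by rewrite -(prim_order_dvd prim_z).
have sum_z : \sum_(x : L) x ^+ e = z ^+ e * \sum_(x : L) x ^+ e.
  rewrite {1}(reindex_inj (mulfI z_neq0)) mulr_sumr /=.
  by apply: eq_bigr => x _; rewrite exprMn.
have : (z ^+ e - 1) * \sum_(x : L) x ^+ e = 0 by rewrite mulrBl mul1r -sum_z subrr.
by move/eqP; rewrite mulf_eq0 subr_eq0 (negbTE ze_neq1) => /eqP.
Qed.

Lemma indicator_expr (x y : L) :
  (x == y)%:R = 1 - \sum_(i < q ^ m) y ^+ (n - i) * x ^+ i.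
Proof.
have := subrXX y x (q ^ m); rewrite !expr_card.
have [<-|neq_xy] := eqVneq x y => [_|sub_xy].
  have le_i (i : 'I_(q ^ m)) : (i <= n)%N by rewrite -ltnS prednK_card.
  under eq_bigr => i _ do rewrite -exprD subnK //.
  by rewrite sumr_const card_ord mulrn_card subr0.
have yx_neq0 : y - x != 0 by rewrite subr_eq0 eq_sym.
have -> : \sum_(i < q ^ m) y ^+ (n - i) * x ^+ i = 1.
  by apply: (mulfI yx_neq0); rewrite -sub_xy mulr1.
by rewrite subrr.
Qed.

Lemma interpolation (w : L -> L) y :
  w y = \sum_x w x - \sum_(i < q ^ m) y ^+ (n - i) * \sum_x w x * x ^+ i.
Proof.
rewrite -(sum_indicator w y).
under eq_bigr => x _ do rewrite indicator_expr mulrBl mul1r.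
rewrite sumrB; congr (_ - _).
under eq_bigr do rewrite mulr_suml; rewrite exchange_big /=.
by apply: eq_bigr => i _; rewrite mulr_sumr; apply: eq_bigr => x _; rewrite mulrAC -mulrA.
Qed.

Lemma RM_code_Fq rho w x : w \in RM_code L q m rho -> w x \in F.
Proof. by rewrite inE => /andP[/forallP]. Qed.

Lemma RM_codeB rho w1 w2 : w1 \in RM_code L q m rho -> w2 \in RM_code L q m rho ->
  [ffun x => w1 x - w2 x] \in RM_code L q m rho.
Proof.
rewrite !inE => /andP[/forallP F1 /forallP C1] /andP[/forallP F2 /forallP C2].
apply/andP; split; first by apply/forallP => x; rewrite ffunE rpredB.
apply/forallP => s; apply/implyP => wt_s; move/implyP/(_ wt_s)/eqP: (C1 s) => S1.
move/implyP/(_ wt_s)/eqP: (C2 s) => S2.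
under eq_bigr do rewrite ffunE mulrBl.
by rewrite sumrB S1 S2 subrr.
Qed.

Section InfoSetCriteria.
Variables (rho : nat) (I : {set L}).
Local Notation C := (RM_code L q m rho).
Hypothesis vanish_on_I :
  forall w, w \in C -> {in I, forall x, w x = 0} -> forall x, w x = 0.

Let restr (f : {ffun L -> L}) : {ffun L -> L} := [ffun x => if x \in I then f x else 0].

Lemma restr_pffun_on (f : {ffun L -> L}) :
  {in I, forall x, f x \in F} -> restr f \in pffun_on 0 I F.
Proof.
move=> f_F; apply/pffun_onP; split.
  by apply/subsetP => x; rewrite inE ffunE; case: ifP => //; rewrite eqxx.
by move=> _ /imageP[x xI ->]; rewrite ffunE xI f_F.
Qed.

Lemma pffun_onK h : h \in pffun_on 0 I F -> restr h = h /\ {in I, forall x, h x \in F}.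
Proof.
case/pffun_onP => supp_h im_h; split => [|x xI]; last exact/im_h/image_f.
apply/ffunP => x; rewrite ffunE; case: ifP => // xnI; apply/esym/eqP.
by apply: contraFT xnI => hx; apply: (subsetP supp_h); rewrite inE.
Qed.

Lemma restr_inj : {in C &, injective restr}.
Proof.
move=> w1 w2 Cw1 Cw2 eq_w; apply/ffunP => x; apply/eqP; rewrite -subr_eq0.
have := vanish_on_I (RM_codeB Cw1 Cw2) _ x; rewrite ffunE => -> // y yI.
by move/ffunP/(_ y): eq_w; rewrite !ffunE yI => ->; rewrite subrr.
Qed.

Lemma info_set_of_card : (q ^ #|I| <= #|C|)%N -> info_set q C I.
Proof.
move=> le_C.
have sub_im : restr @: C \subset pffun_on 0 I F.
  apply/subsetP => _ /imsetP[w Cw ->]; apply: restr_pffun_on => x _.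
  exact: RM_code_Fq Cw.
have card_pf : #|pffun_on 0 I F| = (q ^ #|I|)%N by rewrite card_pffun_on card_Fq.
have card_im : #|restr @: C| = (q ^ #|I|)%N.
  apply/eqP; rewrite eqn_leq -card_pf subset_leq_card //= card_pf.
  by rewrite card_in_imset //; exact: restr_inj.
have im_eq := subset_cardP (etrans card_im (esym card_pf)) sub_im.
split; first by rewrite /code_dim -(card_in_imset restr_inj) card_im trunc_expnK ?q_gt1.
move=> f f_F; have /imsetP[w Cw restr_w] : restr [ffun x => f x] \in restr @: C.
  by rewrite im_eq restr_pffun_on // => x; rewrite ffunE; exact: f_F.
by exists w => // x xI; move/ffunP/(_ x): restr_w; rewrite !ffunE xI.
Qed.

Lemma info_set_of_onto :
    (forall f : L -> L, {in I, forall x, f x \in F} ->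
       exists2 c, c \in C & {in I, forall x, c x = f x}) ->
  info_set q C I.
Proof.
move=> onto; apply: info_set_of_card.
have sub_im : pffun_on 0 I F \subset restr @: C.
  apply/subsetP => h /pffun_onK[restr_h h_F]; have [c Cc ch] := onto h h_F.
  apply/imsetP; exists c => //; rewrite -restr_h; apply/ffunP => x.
  by rewrite !ffunE; case: ifP => // /ch ->.
have := subset_leq_card sub_im; rewrite card_pffun_on card_Fq => le_im.
exact: leq_trans le_im (leq_imset_card _ _).
Qed.

End InfoSetCriteria.

Lemma RM1_power_sum_support w i : w \in RM_code L q m 1 -> (i < n)%N ->
  \sum_x w x * x ^+ i != 0 -> exists j, (n - i = q ^ j)%N.
Proof.
rewrite inE => /andP[_ /forallP checks] lt_in S_neq0.
have wt_i : (m * (q - 1) - 1 <= wt_q q i)%N.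
  rewrite leqNgt; apply: contra S_neq0 => wt_i.
  by move/implyP: (checks (Ordinal lt_in)); apply.
have lt_i : (i < q ^ m)%N by rewrite -prednK_card ltnW.
have := wt_q_compl q_gt1 lt_i; rewrite subn1 => wt_sum.
have : wt_q q (n - i) != 0%N.
  by apply: contraTneq lt_in => /(wt_q_eq0 q_gt1)/eqP; rewrite subn_eq0 leqNgt.
move: (m * (q - 1))%N wt_sum wt_i => M wt_sum wt_i wt_ni.
by apply: (wt_q_eq1 q_gt1); lia.
Qed.

(* By interpolation, w y - w 0 = sum_i (0^(n-i) - y^(n-i)) S_i, and S_i vanishes
   unless n - i is 0 or a power of q. *)
Lemma RM1_affine w : w \in RM_code L q m 1 -> Fq_linear (fun y => w y - w 0).
Proof.
move=> Cw.
apply: (@Fq_linear_eq (fun y => \sum_(i < q ^ m)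
          (0 ^+ (n - i) - y ^+ (n - i)) * \sum_x w x * x ^+ i)); last first.
  move=> y; rewrite [w y]interpolation [w 0]interpolation.
  under eq_bigr do rewrite mulrBl; rewrite sumrB; ring.
apply: Fq_linear_sum => i; set S := \sum_x _.
have [lt_in|le_ni] := ltnP i n; last first.
  apply: (Fq_linear_eq (Fq_linear_frob 0 0)) => y.
  have /eqP-> : (n - i == 0)%N by rewrite subn_eq0.
  by rewrite !expr0 subrr !mul0r.
have [S0|/(RM1_power_sum_support Cw lt_in)[j ->]] := eqVneq S 0.
  by apply: (Fq_linear_eq (Fq_linear_frob 0 0)) => y; rewrite S0 !mulr0 mul0r.
apply: (Fq_linear_eq (Fq_linear_frob (- S) j)) => y.
by rewrite frob0 sub0r !mulNr mulrC.
Qed.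

Definition trace (y : L) := \sum_(j < m) y ^+ (q ^ j).

Lemma trace_Fq y : trace y \in F.
Proof.
pose f (j : 'I_m.+1) := y ^+ (q ^ j).
have shift := etrans (esym (@big_ord_recl L 0 +%R m f)) (@big_ord_recr L 0 +%R m f).
rewrite /f /= expr_card expn0 expr1 addrC in shift.
rewrite inE /trace -[q in _ ^+ q]expn1 frob_sum -[X in _ == X](addrI _ shift).
by apply/eqP/eq_bigr => j _; rewrite -exprM -expnSr /bump add1n.
Qed.

Lemma trace0 : trace 0 = 0.
Proof. by apply: big1 => j _; rewrite frob0. Qed.

Lemma traceB y z : trace (y - z) = trace y - trace z.
Proof. by rewrite /trace -sumrB; apply: eq_bigr => j _; rewrite frobB. Qed.

Lemma trace_nondegenerate d : (forall x, trace (d * x) = 0) -> d = 0.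
Proof.
move=> trace_d0; apply/eqP; apply: contraT => d_neq0.
pose P : {poly L} := \sum_(j < m) d ^+ (q ^ j) *: 'X^(q ^ j).
have coef1_P : P`_1 = d.
  rewrite coef_sum (bigD1 (Ordinal m_gt0)) //= coefZ coefXn expn0 eqxx mulr1 expr1.
  rewrite big1 ?addr0 // => j j_neq0; rewrite coefZ coefXn.
  have j_gt0 : (0 < j)%N by rewrite lt0n; apply: contraNneq j_neq0 => j0; exact/eqP/val_inj.
  by rewrite -[1%N](expn0 q) eqn_exp2l ?q_gt1 // eq_sym gtn_eqF // mulr0.
have P_neq0 : P != 0 by apply: contra_neq d_neq0 => P0; rewrite -coef1_P P0 coef0.
have size_P : (size P <= q ^ m)%N.
  apply: (leq_trans (size_sum _ _ _)); apply/bigmax_leqP => j _.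
  by rewrite (leq_trans (size_scale_leq _ _)) // size_polyXn ltn_exp2l ?q_gt1.
have roots_P : all (root P) (enum L).
  apply/allP => x _; rewrite /root horner_sum; apply/eqP; rewrite -[RHS](trace_d0 x).
  apply: eq_bigr => j _.
  by rewrite hornerZ hornerXn exprMn.
have := max_poly_roots P_neq0 roots_P (enum_uniq _).
by rewrite -cardE card_L ltnNge size_P.
Qed.

Definition affine_word c b : {ffun L -> L} := [ffun x => c + trace (b * x)].

Lemma ndvdn_expn_add j s : (j < m)%N -> (s < n)%N ->
  (wt_q q s < m * (q - 1) - 1)%N -> ~~ (n %| q ^ j + s)%N.
Proof.
move=> lt_jm lt_sn wt_s; apply/negP => /dvdnP[t eq_t].
have lt_qj : (q ^ j < q ^ m)%N by rewrite ltn_exp2l ?q_gt1.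
have qj_gt0 : (0 < q ^ j)%N by rewrite expn_gt0 ltnW ?q_gt1.
have eq_n := prednK_card.
have t1 : t = 1%N.
  case: t eq_t => [|[|t]] eq_t //; first by move: eq_t; rewrite mul0n; lia.
  by move: eq_t; rewrite !mulSn; move: (t * n)%N => T; lia.
have := wt_q_compl q_gt1 lt_qj; rewrite wt_q_expn ?q_gt1 // subn1.
have -> : (n - q ^ j = s)%N by move: eq_t; rewrite t1 mul1n; lia.
by move: (m * (q - 1))%N wt_s => M; lia.
Qed.

Lemma affine_word_RM1 c b : c \in F -> affine_word c b \in RM_code L q m 1.
Proof.
move=> c_F; rewrite inE; apply/andP; split.
  by apply/forallP => x; rewrite ffunE rpredD ?trace_Fq.
apply/forallP => s; apply/implyP => wt_s; have lt_sn := ltn_ord s.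
under eq_bigr do rewrite ffunE mulrDl; rewrite big_split -mulr_sumr /=.
have -> : \sum_(x : L) x ^+ s = 0.
  have [->|s_gt0] := posnP s; first exact: sum_expr0.
  by apply: sum_expr_eq0; rewrite gtnNdvd.
under eq_bigr do rewrite mulr_suml; rewrite exchange_big big1 ?mulr0 ?addr0 //= => j _.
under eq_bigr do rewrite exprMn -mulrA -exprD.
by rewrite -mulr_sumr sum_expr_eq0 ?mulr0 ?ndvdn_expn_add.
Qed.

Lemma affine_word_inj c b c' b' : affine_word c b = affine_word c' b' -> c = c' /\ b = b'.
Proof.
move=> /ffunP eq_w; have := eq_w 0; rewrite !ffunE !mulr0 trace0 !addr0 => eq_c.
split=> //; apply/eqP; rewrite -subr_eq0; apply/eqP/trace_nondegenerate => x.
have := eq_w x; rewrite !ffunE eq_c => /addrI eq_tr.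
by rewrite mulrBl traceB eq_tr subrr.
Qed.

Lemma card_RM1 : (q ^ m.+1 <= #|RM_code L q m 1|)%N.
Proof.
pose A := [set affine_word u.1 u.2 | u in setX F [set: L]].
have sub : A \subset RM_code L q m 1.
  apply/subsetP => _ /imsetP[[c b] /setXP[c_F _] ->].
  exact: affine_word_RM1.
apply: leq_trans (subset_leq_card sub).
rewrite card_in_imset ?cardsX ?cardsT ?card_Fq ?card_L ?expnS //.
by move=> [c b] [c' b'] _ _ /= /affine_word_inj[-> ->].
Qed.

Lemma mq1_ge2 : (1 < n)%N -> (2 <= m * (q - 1))%N.
Proof.
move=> n_gt1; have [m1|m_neq1] := eqVneq m 1%N.
  by move: n_gt1; rewrite m1 expn1 mul1n -subn1.
by rewrite -[2%N]muln1 leq_mul // ?subn_gt0 ?q_gt1 // ltn_neqAle eq_sym m_neq1.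
Qed.

Lemma RM2P w : (1 < n)%N ->
  w \in RM_code L q m (m * (q - 1) - 2) <->
  [/\ forall x, w x \in F, \sum_x w x = 0 & \sum_x w x * x = 0].
Proof.
move=> n_gt1; have two_le := mq1_ge2 n_gt1.
rewrite inE; have -> : (m * (q - 1) - (m * (q - 1) - 2) = 2)%N.
  by move: (m * (q - 1))%N two_le => M; lia.
split=> [/andP[/forallP w_F /forallP checks]|[w_F sum0 sum1]].
  split=> //.
    by move/implyP/(_ isT)/eqP: (checks (Ordinal n_gt0)); under eq_bigr do rewrite mulr1.
  move/implyP: (checks (Ordinal n_gt1)) => /=.
  have -> : wt_q q 1 = 1%N by rewrite -(expn0 q) wt_q_expn ?q_gt1.
  by move/(_ isT)/eqP; under eq_bigr do rewrite expr1.
apply/andP; split; first exact/forallP.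
apply/forallP => s; apply/implyP => wt_s.
have [/(wt_q_eq0 q_gt1)->|/(wt_q_eq1 q_gt1)[j ->]] : wt_q q s = 0%N \/ wt_q q s = 1%N by lia.
  by under eq_bigr do rewrite mulr1; rewrite sum0.
apply/eqP; transitivity ((\sum_x w x * x) ^+ (q ^ j)); last by rewrite sum1 frob0.
rewrite frob_sum; apply: eq_bigr => x _.
by rewrite exprMn (Fq_expn _ (w_F x)).
Qed.

Section Basis.
Variables (I : finType) (g : I -> L).
Hypotheses (g_free : Fq_free g) (card_I : #|I| = m).

Lemma Fq_free_span y :
  exists2 mu : {ffun I -> L}, (forall u, mu u \in F) & \sum_u mu u * g u = y.
Proof.
pose comb (mu : {ffun I -> L}) := \sum_u mu u * g u.
have comb_inj : {in ffun_on F &, injective comb}.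
  move=> mu nu /ffun_onP mu_F /ffun_onP nu_F; rewrite /comb => eq_comb.
  apply/ffunP => u; apply/eqP; rewrite -subr_eq0; apply/eqP; move: u.
  apply: (g_free (mu := fun u => mu u - nu u)) => [u|]; first by rewrite rpredB.
  by under eq_bigr do rewrite mulrBl; rewrite sumrB eq_comb subrr.
have /setP/(_ y) : comb @: ffun_on F = [set: L].
  apply/eqP; rewrite eqEcard subsetT cardsT card_in_imset //=.
  by rewrite card_ffun_on card_Fq card_I card_L.
by rewrite inE => /imsetP[mu /ffun_onP mu_F ->]; exists mu.
Qed.

Let B := [set g u | u : I].

Lemma notin0_basis : 0 \notin B.
Proof. by apply/imsetP => -[u _ /esym/eqP]; rewrite (negbTE (Fq_free_neq0 g_free u)). Qed.

Lemma RM1_info_set : info_set q (RM_code L q m 1) (0 |: B).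
Proof.
apply: info_set_of_card => [w Cw w_I y|]; last first.
  rewrite cardsU1 notin0_basis card_imset ?card_I ?card_RM1 //.
  exact: Fq_free_inj.
have w_0 : w 0 = 0 by apply: w_I; rewrite setU11.
have [mu mu_F <-] := Fq_free_span y.
have := Fq_linear_comb g (RM1_affine Cw) mu_F; rewrite /= w_0 !subr0 => ->.
by apply: big1 => u _; rewrite w_I ?subrr ?mulr0 // in_setU1 imset_f ?orbT.
Qed.

Lemma sum_over_basis (h : L -> L) :
  \sum_x h x = \sum_(x in ~: (0 |: B)) h x + h 0 + \sum_u h (g u).
Proof.
rewrite (bigID (mem (~: (0 |: B)))) /= -addrA; congr (_ + _).
rewrite (eq_bigl (mem (0 |: B))) => [|x]; last by rewrite !inE negbK.
rewrite big_setU1 ?notin0_basis //= big_imset //; exact: in2W (Fq_free_inj g_free).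
Qed.

Lemma RM2_info_set : (1 < n)%N ->
  info_set q (RM_code L q m (m * (q - 1) - 2)) (~: (0 |: B)).
Proof.
move=> n_gt1; apply: info_set_of_onto => [w /(RM2P _ n_gt1)[w_F sum0 sum1] w_I|f f_F].
  have w_g u : w (g u) = 0.
    move: u; apply: (g_free (mu := fun u => w (g u))) => //.
    move: sum1; rewrite sum_over_basis mulr0 addr0 big1 ?add0r // => x /w_I->.
    by rewrite mul0r.
  have w_0 : w 0 = 0.
    move: sum0; rewrite sum_over_basis big1 ?add0r => [|x /w_I //].
    by rewrite big1 ?addr0.
  move=> x; have [x_I|] := boolP (x \in ~: (0 |: B)); first exact: w_I.
  by rewrite inE negbK => /setU1P[->|/imsetP[u _ ->]].
pose S0 := \sum_(x in ~: (0 |: B)) f x.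
pose S1 := \sum_(x in ~: (0 |: B)) f x * x.
have [mu mu_F sum_mu] := Fq_free_span (- S1).
pose w := [ffun x => if x \in ~: (0 |: B) then f x
                     else if x == 0 then - S0 - \sum_u mu u
                     else \sum_(u | g u == x) mu u].
have w_I x : x \in ~: (0 |: B) -> w x = f x by rewrite ffunE => ->.
have w_0 : w 0 = - S0 - \sum_u mu u by rewrite ffunE !inE eqxx.
have w_g u : w (g u) = mu u.
  rewrite ffunE !inE imset_f ?orbT //= (negbTE (Fq_free_neq0 g_free u)).
  by rewrite (eq_bigl (pred1 u)) ?big_pred1_eq // => v; rewrite (inj_eq (Fq_free_inj g_free)).
exists w => //; apply/RM2P => //; split.
- move=> x; rewrite ffunE; case: ifP => [/f_F//|_].
  by case: ifP => _; rewrite ?rpredB ?rpredN ?rpred_sum // => *; apply: f_F.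
- rewrite sum_over_basis w_0 (eq_bigr _ w_I) (eq_bigr _ (fun u _ => w_g u)) -/S0.
  by rewrite addNKr addNr.
- rewrite sum_over_basis mulr0 addr0 (eq_bigr (fun x => f x * x)) => [|x /w_I->//].
  rewrite (eq_bigr (fun u => mu u * g u)) => [|u _]; last by rewrite w_g.
  by rewrite -/S1 sum_mu subrr.
Qed.

End Basis.

Section CyclicBasis.
Variables (r1 r2 a : nat) (beta gamma : L).
Hypotheses (n_gt1 : (1 < n)%N) (n_eq : n = (r1 * r2)%N) (cop_r : coprime r1 r2).
Hypotheses (a_gt0 : (0 < a)%N) (qa_eq1 : (q ^ a = 1 %[mod r1])%N)
  (a_min : forall k, (0 < k)%N -> (q ^ k = 1 %[mod r1])%N -> (a <= k)%N).
Hypotheses (beta_prim : r1.-primitive_root beta) (gamma_prim : r2.-primitive_root gamma).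

Definition cyclic_basis (u : 'I_a * 'I_(m %/ a)) := beta ^+ u.1 * gamma ^+ u.2.

Lemma cyclic_basis_free : Fq_free cyclic_basis.
Proof.
move=> lam lam_F sum0 [i j].
have beta_conj_inj : injective (fun s : 'I_a => beta ^+ (q ^ (1 * s))).
  move=> s t /eqP; rewrite !mul1n (eq_prim_root_expr beta_prim) => /eqP.
  exact: eq_expn_mod_r1 q_gt1 m_gt0 n_gt1 n_eq cop_r a_gt0 qa_eq1 a_min s t.
have gamma_conj_inj : injective (fun s : 'I_(m %/ a) => gamma ^+ (q ^ (a * s))).
  move=> s t /eqP; rewrite (eq_prim_root_expr gamma_prim) => /eqP.
  exact: eq_expn_mod_r2 q_gt1 m_gt0 n_gt1 n_eq cop_r a_gt0 qa_eq1 a_min s t.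
have beta_qa : beta ^+ (q ^ a) = beta.
  by rewrite -(prim_expr_mod beta_prim) qa_eq1 prim_expr_mod ?expr1.
pose mu k := \sum_(i < a) lam (i, k) * beta ^+ i.
have mu_fixed k : mu k ^+ (q ^ a) = mu k.
  rewrite frob_sum; apply: eq_bigr => i' _.
  by rewrite exprMn Fq_expn // -exprM mulnC exprM beta_qa.
have sum_mu : \sum_(k < m %/ a) mu k * gamma ^+ k = 0.
  pose F2 i k := lam (i, k) * cyclic_basis (i, k).
  rewrite -[RHS]sum0 (eq_bigr (fun u => F2 u.1 u.2)) => [|[] //].
  rewrite -pair_bigA /F2 /= exchange_big; apply: eq_bigr => k _.
  by rewrite mulr_suml; apply: eq_bigr => i' _; rewrite mulrA.
have /(_ j) := free_powers_conj gamma_conj_inj mu_fixed sum_mu.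
by move/(free_powers_conj beta_conj_inj (fun i => Fq_expn 1 (lam_F _))).
Qed.

Lemma card_cyclic_index : #|{: 'I_a * 'I_(m %/ a)}| = m.
Proof.
rewrite card_prod !card_ord mulnC divnK //.
exact: a_dvd_m q_gt1 n_eq a_gt0 qa_eq1 a_min.
Qed.

End CyclicBasis.

Section PrimitiveRootExponent.
Variable alpha : L.
Hypotheses (n_gt1 : (1 < n)%N) (alpha_prim : n.-primitive_root alpha).

Lemma val_Zn (i : 'Z_n) : (i < n)%N.
Proof. by case: i => i /=; rewrite Zp_cast. Qed.

Lemma expr_ZnD (x y : 'Z_n) : alpha ^+ (x + y)%R = alpha ^+ x * alpha ^+ y.
Proof.
rewrite -exprD -[RHS](prim_expr_mod alpha_prim) /=.
by move: (nat_of_ord x) (nat_of_ord y) => u v; rewrite Zp_cast.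
Qed.

Lemma expr_ZnMn (x : 'Z_n) k : alpha ^+ (x *+ k)%R = alpha ^+ x ^+ k.
Proof. by elim: k => [|k IH]; rewrite ?mulr0n ?expr0 // mulrS expr_ZnD IH exprS. Qed.

Lemma expr_Zn_eq1 (x : 'Z_n) : (alpha ^+ x == 1) = (x == 0).
Proof.
rewrite -(prim_order_dvd alpha_prim) -val_eqE /=.
have [->|x_gt0] := posnP x; first by rewrite dvdn0.
by rewrite gtnNdvd ?val_Zn // gtn_eqF.
Qed.

Lemma expr_Zn_inj : injective (fun i : 'Z_n => alpha ^+ i).
Proof.
move=> i j /eqP; rewrite (eq_prim_root_expr alpha_prim) !modn_small ?val_Zn //.
by move/eqP/val_inj.
Qed.

Lemma imset_expr_ZnC (A : {set 'Z_n}) :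
  [set alpha ^+ (nat_of_ord i) | i in ~: A] =
  ~: (0 |: [set alpha ^+ (nat_of_ord i) | i in A]).
Proof.
have alpha_neq0 : alpha != 0 by rewrite (prim_root_eq0 alpha_prim) gtn_eqF // ltnW.
apply/setP => y; rewrite !inE negb_or; apply/imsetP/andP => [[i iA ->]|[y_neq0 yA]].
  by rewrite expf_neq0 // (mem_imset _ _ expr_Zn_inj) -in_setC.
have [i y_i] := prim_rootP alpha_prim (expr_n_eq1 y_neq0); subst y.
have val_i : nat_of_ord (inZp i : 'Z_n) = i by rewrite /= Zp_cast // modn_small.
exists (inZp i); rewrite ?val_i // inE; apply: contra yA => iA.
by apply/imsetP; exists (inZp i); rewrite ?val_i.
Qed.

End PrimitiveRootExponent.

Section CyclicDecomposition.
Variables (r1 r2 a : nat) (alpha : L) (T : 'Z_n -> 'Z_r1 * 'Z_r2) (e1 e2 : 'Z_n).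
Hypotheses (n_gt1 : (1 < n)%N) (n_eq : n = (r1 * r2)%N) (cop_r : coprime r1 r2)
  (r1_gt1 : (1 < r1)%N) (r2_gt1 : (1 < r2)%N).
Hypotheses (a_gt0 : (0 < a)%N) (qa_eq1 : (q ^ a = 1 %[mod r1])%N)
  (a_min : forall k, (0 < k)%N -> (q ^ k = 1 %[mod r1])%N -> (a <= k)%N).
Hypotheses (alpha_prim : n.-primitive_root alpha)
  (T_add : forall x y, T (x + y) = T x + T y) (T_bij : bijective T)
  (T_e1 : T e1 = (1, 0)) (T_e2 : T e2 = (0, 1)).

Lemma T0 : T 0 = 0.
Proof. by apply: (addrI (T 0)); rewrite -T_add !addr0. Qed.

Lemma T_mulrn x k : T (x *+ k) = T x *+ k.
Proof. by elim: k => [|k IH]; rewrite ?mulr0n ?T0 // !mulrS T_add IH. Qed.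

Lemma expr_e1_eq1 j : (alpha ^+ e1 ^+ j == 1) = (r1 %| j)%N.
Proof.
rewrite -expr_ZnMn // expr_Zn_eq1 // -(inj_eq (bij_inj T_bij)) T_mulrn T0 T_e1.
by rewrite pair_mulrn mul0rn xpair_eqE eqxx andbT Zp_natr_eq0.
Qed.

Lemma expr_e2_eq1 j : (alpha ^+ e2 ^+ j == 1) = (r2 %| j)%N.
Proof.
rewrite -expr_ZnMn // expr_Zn_eq1 // -(inj_eq (bij_inj T_bij)) T_mulrn T0 T_e2.
by rewrite pair_mulrn mul0rn xpair_eqE eqxx Zp_natr_eq0.
Qed.

Lemma expr_Zn_decomp (i : 'Z_n) :
  alpha ^+ i = alpha ^+ e1 ^+ (T i).1 * alpha ^+ e2 ^+ (T i).2.
Proof.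
have i_eq : i = e1 *+ (T i).1 + e2 *+ (T i).2.
  apply: (bij_inj T_bij); rewrite T_add !T_mulrn T_e1 T_e2.
  case: (T i) => u v; rewrite !pair_mulrn !mul0rn.
  by apply: injective_projections; rewrite raddfD /= ?addr0 ?add0r natr_Zp.
by rewrite {1}i_eq expr_ZnD // !expr_ZnMn.
Qed.

Lemma imset_TinvGamma :
  [set alpha ^+ (nat_of_ord i) | i in [set i | ((T i).1 < a)%N && ((T i).2 < m %/ a)%N]]
  = [set cyclic_basis (alpha ^+ e1) (alpha ^+ e2) u | u : 'I_a * 'I_(m %/ a)].
Proof.
apply/setP => y; apply/imsetP/imsetP => [[i]|[u _ ->]].
  rewrite inE => /andP[lt1 lt2] ->; exists (Ordinal lt1, Ordinal lt2) => //.
  exact: expr_Zn_decomp.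
have val1 : nat_of_ord (u.1%:R : 'Z_r1) = u.1.
  rewrite val_Zp_nat // modn_small // (leq_trans (ltn_ord _)) //.
  exact: a_le_r1 q_gt1 m_gt0 n_gt1 n_eq cop_r a_gt0 qa_eq1 a_min.
have val2 : nat_of_ord (u.2%:R : 'Z_r2) = u.2.
  rewrite val_Zp_nat // modn_small // (leq_trans (ltn_ord _)) //.
  exact: div_a_le_r2 q_gt1 m_gt0 n_gt1 n_eq cop_r a_gt0 qa_eq1 a_min.
have [Tinv _ TK] := T_bij.
exists (Tinv (u.1%:R, u.2%:R)); first by rewrite inE TK val1 val2 !ltn_ord.
by rewrite [RHS]expr_Zn_decomp TK val1 val2.
Qed.

End CyclicDecomposition.

End FullField.
End FiniteField.

Lemma pchar_nat_of_card (L : finFieldType) (q m : nat) :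
  (exists p k : nat, [/\ prime p, (0 < k)%N & q = (p ^ k)%N]) -> #|L| = (q ^ m)%N ->
  [pchar L].-nat q.
Proof.
move=> [p [k [p_prime k_gt0 q_eq]]] card_L.
have p_char : p \in [pchar L].
  by apply: (card_finPcharP (n := (k * m)%N)); rewrite // card_L q_eq expnM.
by rewrite q_eq (eq_pnat _ (pcharf_eq p_char)) pnatX pnat_id.
Qed.

Theorem mainTheorem2
  (q m r1 r2 a : nat) (L : finFieldType)
  (Hq : exists p k : nat, [/\ prime p, (0 < k)%N & q = (p ^ k)%N])
  (Hm : (0 < m)%N)
  (HL : #|L| = (q ^ m)%N)
  (Hn : (q ^ m).-1 = (r1 * r2)%N)
  (Hr1 : (1 < r1)%N) (Hr2 : (1 < r2)%N) (Hcop : coprime r1 r2)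
  (* a is the multiplicative order of q modulo r1 *)
  (Ha0 : (0 < a)%N) (Ha1 : (q ^ a = 1 %[mod r1])%N)
  (Hamin : forall k : nat, (0 < k)%N -> (q ^ k = 1 %[mod r1])%N -> (a <= k)%N)
  (alpha : L) (Halpha : ((q ^ m).-1).-primitive_root alpha)
  (T : 'Z_((q ^ m).-1) -> 'Z_r1 * 'Z_r2)
  (HTadd : forall x y, T (x + y) = T x + T y)
  (HTbij : bijective T) :
  let TinvGamma := [set i : 'Z_((q ^ m).-1) |
                      ((T i).1 < a)%N && ((T i).2 < m %/ a)%N] in
  info_set q (RM_code L q m 1)
    (0 |: [set alpha ^+ (nat_of_ord i) | i in TinvGamma])
  /\
  info_set q (RM_code L q m (m * (q - 1) - 2))
    [set alpha ^+ (nat_of_ord i) | i in ~: TinvGamma].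
Proof.
move=> TinvGamma.
have pchar_q : [pchar L].-nat q by apply: pchar_nat_of_card HL.
have n_gt1 : (1 < (q ^ m).-1)%N by rewrite Hn (leq_mul Hr1 (ltnW Hr2)).
have [Tinv _ TK] := HTbij.
have beta_prim :=
  prim_root_dvd (ltnW Hr1) (expr_e1_eq1 n_gt1 Hr1 Halpha HTadd HTbij (TK (1, 0))).
have gamma_prim :=
  prim_root_dvd (ltnW Hr2) (expr_e2_eq1 n_gt1 Hr2 Halpha HTadd HTbij (TK (0, 1))).
have basis_free :=
  cyclic_basis_free pchar_q Hm HL n_gt1 Hn Hcop Ha0 Ha1 Hamin beta_prim gamma_prim.
have card_basis := card_cyclic_index Hm HL Hn Ha0 Ha1 Hamin.
have Gamma_basis := imset_TinvGamma Hm HL n_gt1 Hn Hcop Hr1 Hr2 Ha0 Ha1 Hamin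
                                    Halpha HTadd HTbij (TK _) (TK _).
rewrite (imset_expr_ZnC Hm HL n_gt1 Halpha) Gamma_basis.
split; first exact: RM1_info_set basis_free card_basis.
exact: RM2_info_set basis_free card_basis n_gt1.
Qed.
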